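(* Let $d\ge3$, $h\ge1$. Then $G(d,h)$ has a cyclic subgroup of order $(d-1)^h$.
   Context: Let $\mathcal{T}(d,h)$ be the rooted tree in which the root $0$ has $d$ children, every vertex at distance $1,\dots,h-1$ from the root has $d-1$ children, and the vertices at distance $h$ are leaves. Let $V$ be its vertex set, $A$ its adjacency matrix, $\Delta := dI-A$, and $\Lambda\subset\mathbb{Z}^V$ the lattice spanned by the rows of $\Delta$. Then $G(d,h):=\mathbb{Z}^V/\Lambda$. *)

From HB Require Import structures.
From mathcomp Require Import all_boot all_order all_algebra.
Set Implicit Arguments. Unset Strict Implicit. Unset Printing Implicit Defensive.
Import GRing.Theory.
Local Open Scope ring_scope.

(* Vertices of T(d,h): words w = [a_1; ...; a_k] with 0 <= k <= h,
   a_1 < d and a_i < d-1 for i >= 2.  The empty word is the root 0;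
   the children of w are the words rcons w a. *)
Definition pre_vert (d h : nat) := {k : 'I_h.+1 & k.-tuple 'I_d}.

Definition word_ok (d h : nat) (u : pre_vert d h) : bool :=
  all (fun a : 'I_d => (a < d.-1)%N) (behead (tagged u)).

Definition vert (d h : nat) := {u : pre_vert d h | word_ok u}.

Definition word (d h : nat) (u : vert d h) : seq 'I_d := tagged (val u).

Definition child_of (d h : nat) (u v : vert d h) : bool :=
  (size (word v) == (size (word u)).+1) &&
  (word u == take (size (word u)) (word v)).

Definition adj (d h : nat) (u v : vert d h) : bool := child_of u v || child_of v u.

Definition Delta_row (d h : nat) (u : vert d h) : {ffun vert d h -> int} :=
  [ffun w => (if u == w then d%:Z else 0) - (if adj u w then 1 else 0)].

Definition in_Lambda (d h : nat) (x : {ffun vert d h -> int}) : Prop :=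
  exists c : vert d h -> int, x = \sum_(u : vert d h) Delta_row u *~ c u.

(* G(d,h) = Z^V / Lambda has a cyclic subgroup of order m (m > 0):
   some class [x] generates a subgroup of order m, i.e. m is the least
   positive k with k x in Lambda. *)
Definition G_has_cyclic_subgroup_of_order (d h m : nat) : Prop :=
  (0 < m)%N /\
  exists x : {ffun vert d h -> int},
    in_Lambda (x *+ m) /\ forall k, (0 < k < m)%N -> ~ in_Lambda (x *+ k).

From mathcomp Require Import all_boot all_order all_algebra.
From mathcomp Require Import zify.
Set Implicit Arguments. Unset Strict Implicit. Unset Printing Implicit Defensive.
Import GRing.Theory.

(* Give a vertex at depth j the weight g j = 1 + (d-1) + ... + (d-1)^(h-j), the
   size of a branch of T(d,h) hanging at depth j.  Then Delta g = d (d-1)^h e_0,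
   so (d-1)^h (d e_0) lies in Lambda.  Conversely, as Delta is symmetric, the
   pairing <x, g> maps Lambda into d (d-1)^h Z, while <k d e_0, g> = k d g 0;
   since g 0 = 1 mod (d-1), (d-1)^h divides k.  Hence d e_0 has order
   exactly (d-1)^h in G(d,h). *)

Lemma card_ord_lt n m : m <= n -> #|[set a : 'I_n | a < m]| = m.
Proof.
move=> le_mn; rewrite -sum1_card (eq_bigl (fun a : 'I_n => a < m)) => [|a].
  by rewrite (big_ord_narrow (F := fun _ => 1) le_mn) sum1_card card_ord.
by rewrite inE.
Qed.

Section SymmetricLattice.

Local Open Scope ring_scope.

Variables (V : finType) (R : V -> {ffun V -> int}).
Hypothesis R_sym : forall u w, R u w = R w u.

Definition in_span (x : {ffun V -> int}) : Prop :=
  exists c : V -> int, x = \sum_u R u *~ c u.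

Definition delta_at (r : V) (b : int) : {ffun V -> int} :=
  [ffun w => if w == r then b else 0].

Variables (g : V -> int) (r : V) (a : int).
Hypothesis R_potential : forall u, \sum_w R u w * g w = if u == r then a else 0.

Lemma in_span_delta_potential : in_span (delta_at r a).
Proof.
rewrite /in_span; exists g; apply/ffunP => w; rewrite sum_ffunE ffunE -R_potential.
by apply: eq_bigr => u _; rewrite ffunMzE mulrzz R_sym.
Qed.

Lemma pairing_sum_rows (c : V -> int) :
  \sum_w (\sum_u R u *~ c u) w * g w = c r * a.
Proof.
under eq_bigr => w _ do rewrite sum_ffunE mulr_suml.
rewrite exchange_big /=.
under eq_bigr => u _.
  rewrite (eq_bigr (fun w => c u * (R u w * g w))); last first.
    by move=> w _; rewrite ffunMzE mulrzz mulrCA mulrA.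
  rewrite -mulr_sumr R_potential; over.
by rewrite (bigD1 r) //= eqxx big1 ?addr0 // => u /negbTE ->; rewrite mulr0.
Qed.

Lemma dvdz_pairing_span x : in_span x -> (a %| \sum_w x w * g w)%Z.
Proof. by move=> [c ->]; rewrite pairing_sum_rows dvdz_mull. Qed.

Lemma in_span_delta_at_mulrn (b : int) (N : nat) : a = b * N%:Z ->
  in_span (delta_at r b *+ N).
Proof.
move=> def_a; suff -> : delta_at r b *+ N = delta_at r a.
  exact: in_span_delta_potential.
apply/ffunP => w; rewrite ffunMnE !ffunE def_a.
by case: eqP; rewrite ?mul0rn // -natz mulr_natr.
Qed.

Lemma in_span_delta_at_dvdn (b : int) (N k : nat) : a = b * N%:Z -> b != 0 ->
  coprime N `|g r| -> in_span (delta_at r b *+ k) -> (N %| k)%N.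
Proof.
move=> def_a nz_b coNg /dvdz_pairing_span.
rewrite (bigD1 r) //= big1 => [|w /negbTE nwr]; last first.
  by rewrite ffunMnE ffunE nwr mul0rn mul0r.
rewrite addr0 ffunMnE ffunE eqxx def_a mulrnAl -mulrnAr dvdz_mul2l //.
by rewrite dvdzE -mulr_natr abszM natz /= Gauss_dvdr // coprime_sym.
Qed.

End SymmetricLattice.

Section Tree.

Variables d h : nat.

Local Notation vert := (vert d h).
Local Notation ok_letters s := (all (fun a : 'I_d => a < d.-1) (behead s)).

Definition depth (u : vert) : nat := size (word u).

Lemma depth_le (u : vert) : depth u <= h.
Proof. by case: u => [[k t] ok]; rewrite /depth /word /= size_tuple -ltnS. Qed.

Lemma ok_letters_word (u : vert) : ok_letters (word u).
Proof. exact: (valP u). Qed.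

Definition mkvert (s : seq 'I_d) (s_le : size s < h.+1) (s_ok : ok_letters s) :
    vert :=
  exist _ (existT (fun k : 'I_h.+1 => k.-tuple 'I_d) (Ordinal s_le) (in_tuple s)) s_ok.

Lemma word_mkvert s s_le s_ok : word (@mkvert s s_le s_ok) = s.
Proof. by []. Qed.

Lemma word_inj : injective (@word d h).
Proof.
move=> [[k t] okt] [[k' t'] okt'] eq_w.
have eq_k : k = k'.
  by apply: val_inj; rewrite /= -(size_tuple t) -(size_tuple t'); congr size.
subst k'; have eq_t : t = t' by exact: val_inj.
by subst t'; apply: val_inj.
Qed.

Definition root : vert := @mkvert [::] erefl erefl.

Lemma depth_eq0 (u : vert) : (depth u == 0) = (u == root).
Proof.
apply/idP/eqP => [|->] //; rewrite /depth size_eq0 => /eqP w0.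
by apply: word_inj; rewrite w0.
Qed.

Lemma depth_child (u w : vert) : child_of u w -> depth w = (depth u).+1.
Proof. by case/andP => /eqP. Qed.

Lemma child_of_irrefl (u : vert) : child_of u u = false.
Proof. by apply/negP => /depth_child; lia. Qed.

Lemma child_of_asym (u w : vert) : child_of u w -> child_of w u = false.
Proof. by move=> /depth_child uw; apply/negP => /depth_child; lia. Qed.

Lemma child_word (a0 : 'I_d) (u w : vert) : child_of u w ->
  word w = rcons (word u) (nth a0 (word w) (depth u)).
Proof.
case/andP => /eqP size_w /eqP take_w; rewrite /depth.
by rewrite [X in rcons X _]take_w -take_nth ?size_w // -size_w take_size.
Qed.

Local Notation arity u := (if depth u == 0 then d else d.-1).

Lemma child_letter_lt (a0 : 'I_d) (u w : vert) : child_of u w ->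
  nth a0 (word w) (depth u) < arity u.
Proof.
move=> uw; case: eqP => [_|u_ne0]; first exact: ltn_ord.
move: (ok_letters_word w); rewrite (child_word a0 uw).
move: (nth _ _ _) u_ne0 => a; rewrite /depth.
by case: (word u) => [|x s] //= _; rewrite all_rcons nth_rcons ltnn eqxx => /andP [].
Qed.

Lemma exists_child (a0 : 'I_d) (u : vert) (a : 'I_d) :
  depth u < h -> a < arity u ->
  exists2 w, child_of u w & nth a0 (word w) (depth u) = a.
Proof.
move=> lt_uh lt_a.
have s_le : size (rcons (word u) a) < h.+1 by rewrite size_rcons ltnS.
have s_ok : ok_letters (rcons (word u) a).
  move: lt_a (ok_letters_word u); rewrite /depth.
  by case: (word u) => [|x s] //= lt_a; rewrite all_rcons lt_a.
exists (mkvert s_le s_ok); last by rewrite word_mkvert nth_rcons ltnn eqxx.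
by rewrite /child_of word_mkvert size_rcons -cats1 take_size_cat ?eqxx.
Qed.

Lemma card_children (u : vert) : 0 < d ->
  #|[pred w | child_of u w]| = if depth u == h then 0 else arity u.
Proof.
move=> d_gt0; pose a0 : 'I_d := Ordinal d_gt0.
have [u_h|u_ne_h] := eqVneq (depth u) h.
  apply: eq_card0 => w; apply/negP => /depth_child w_h.
  by have := depth_le w; rewrite w_h u_h ltnn.
have lt_uh : depth u < h by rewrite ltn_neqAle u_ne_h depth_le.
pose last_letter (w : vert) := nth a0 (word w) (depth u).
have inj_last : {in [pred w | child_of u w] &, injective last_letter}.
  move=> w1 w2 uw1 uw2 eq_last; apply: word_inj.
  by rewrite (child_word a0 uw1) (child_word a0 uw2) -/(last_letter w1) eq_last.
rewrite -(card_in_imset inj_last) -(@card_ord_lt d (arity u)); last first.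
  by case: ifP => // _; exact: leq_pred.
congr (#|pred_of_set _|); apply/setP => a; rewrite inE; apply/imsetP/idP.
  by case=> w uw ->; exact: child_letter_lt.
by move=> /(exists_child a0 lt_uh) [w uw <-]; exists w.
Qed.

Lemma exists_parent (u : vert) j : depth u = j.+1 ->
  exists2 p : vert, depth p = j & forall w, child_of w u = (w == p).
Proof.
move=> u_j; set s := take j (word u).
have size_s : size s = j by rewrite size_take /depth -/(depth u) u_j ltnSn.
have s_le : size s < h.+1 by have := depth_le u; rewrite size_s u_j; lia.
have s_ok : ok_letters s.
  move: (ok_letters_word u); rewrite /s; case: (word u) => [|x t] //.
  case: j {u_j s size_s s_le} => [|j] //=.
  by rewrite -{1}(cat_take_drop j t) all_cat => /andP [].
exists (mkvert s_le s_ok) => [|w]; first by rewrite /depth word_mkvert.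
apply/idP/eqP => [/andP [/eqP w_j /eqP w_s]|->].
  apply: word_inj; rewrite word_mkvert w_s.
  by move: w_j; rewrite -/(depth u) u_j => -[<-].
by rewrite /child_of word_mkvert size_s -/(depth u) u_j !eqxx.
Qed.

Lemma card_parents (u : vert) : #|[pred w | child_of w u]| = (depth u != 0).
Proof.
case u_j: (depth u) => [|j] /=.
  by apply: eq_card0 => w; apply/negP => /depth_child; rewrite u_j.
by have [p _ parent_p] := exists_parent u_j; rewrite (eq_card1 (x := p)).
Qed.

End Tree.

Definition branch_size (q h j : nat) : nat := \sum_(i < (h - j).+1) q ^ i.

Lemma branch_size_id q h : branch_size q h h = 1.
Proof. by rewrite /branch_size subnn big_ord1. Qed.

Lemma branch_sizeS q h j : j < h ->
  branch_size q h j = 1 + q * branch_size q h j.+1.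
Proof.
move=> lt_jh; rewrite /branch_size -[h - j](@subnSK j h) //.
rewrite big_ord_recl expn0 big_distrr; congr (_ + _).
by apply: eq_bigr => i _; rewrite expnS.
Qed.

Lemma branch_size0 q h : 0 < h ->
  branch_size q h 0 = branch_size q h 1 + q ^ h.
Proof. by move=> h_gt0; rewrite /branch_size subn0 subn1 prednK // big_ord_recr. Qed.

Lemma coprime_branch_size0 q h : 0 < h -> coprime (q ^ h) (branch_size q h 0).
Proof.
move=> h_gt0; rewrite coprimeXl // branch_sizeS //.
by rewrite -coprime_modr addnC mulnC modnMDl coprime_modr coprimen1.
Qed.

Local Open Scope ring_scope.

Lemma Delta_row_sym d h (u w : vert d h) : Delta_row u w = Delta_row w u.
Proof. by rewrite !ffunE eq_sym /adj orbC. Qed.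

Lemma sum_Delta_row d h (u : vert d h) (f : vert d h -> int) :
  \sum_w Delta_row u w * f w =
    d%:Z * f u - \sum_(w | child_of u w) f w - \sum_(w | child_of w u) f w.
Proof.
have split_row w : Delta_row u w * f w =
    (if u == w then d%:Z * f w else 0) - (if child_of u w then f w else 0)
      - (if child_of w u then f w else 0).
  rewrite ffunE /adj mulrBl; case: eqVneq => [<-|_].
    by rewrite child_of_irrefl /= mul0r !subr0.
  rewrite mul0r sub0r; case: (boolP (child_of u w)) => [/child_of_asym -> | _] /=.
    by rewrite mul1r subr0 sub0r.
  by case: (child_of w u); rewrite ?mul1r ?mul0r !sub0r ?oppr0.
rewrite (eq_bigr _ (fun w _ => split_row w)) !sumrB -!big_mkcond /=.
by rewrite (big_pred1 u) // => w; rewrite eq_sym.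
Qed.

Lemma sum_Delta_row_depth d h (u : vert d h) (F : nat -> int) :
  \sum_w Delta_row u w * F (depth w) =
    d%:Z * F (depth u) - #|[pred w | child_of u w]|%:R * F (depth u).+1
      - (depth u != 0%N)%:R * F (depth u).-1.
Proof.
rewrite sum_Delta_row -card_parents !mulr_natl -!sumr_const.
by congr (_ - _ - _); apply: eq_big => // w /depth_child ->.
Qed.

Lemma Delta_branch_size d h (u : vert d h) : (0 < d)%N -> (0 < h)%N ->
  \sum_w Delta_row u w * (branch_size d.-1 h (depth w))%:Z =
    if u == root d h then (d * d.-1 ^ h)%N%:Z else 0.
Proof.
move=> d_gt0 h_gt0.
rewrite (sum_Delta_row_depth u (fun j => (branch_size d.-1 h j)%:Z)).
rewrite card_children // -depth_eq0.
case: (depth u) (depth_le u) => [|j] /= j_le.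
  by rewrite eq_sym (gtn_eqF h_gt0) branch_size0 //; nia.
have [j_h | j_ne] := eqVneq j.+1 h.
  by rewrite -j_h (branch_sizeS _ (ltnSn j)) branch_size_id; nia.
have lt_jh : (j.+1 < h)%N by rewrite ltn_neqAle j_ne.
by rewrite (branch_sizeS _ (ltnW lt_jh)) (branch_sizeS _ lt_jh); nia.
Qed.

Theorem lemma8p18 (d h : nat) (hd : (3 <= d)%N) (hh : (1 <= h)%N) :
  G_has_cyclic_subgroup_of_order d h ((d - 1) ^ h)%N.
Proof.
have d_gt0 : (0 < d)%N by lia.
pose g (w : vert d h) := (branch_size d.-1 h (depth w))%:Z.
have g_potential u : \sum_w Delta_row u w * g w =
    if u == root d h then d%:Z * (d.-1 ^ h)%N%:Z else 0.
  by rewrite Delta_branch_size // PoszM.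
have d_neq0 : d%:Z != 0 by rewrite eqz_nat -lt0n.
rewrite subn1; split; first by rewrite expn_gt0; lia.
have R_sym := @Delta_row_sym d h.
exists (delta_at (root d h) d); split.
  exact: (in_span_delta_at_mulrn R_sym g_potential (erefl _)).
move=> k /andP [k_gt0 lt_kN].
move=> /(in_span_delta_at_dvdn g_potential (erefl _) d_neq0).
by move=> /(_ (coprime_branch_size0 d.-1 hh)) /(dvdn_leq k_gt0); lia.
Qed.
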